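(* Let $G$ be a connected graph that has a cut vertex. Then a minimum connecting transition set of $G$ has size exactly $|V(G)|-2$; equivalently, $\{V(G)\}$ is a connecting hypergraph of $G$ of minimum cost.
   Context: All graphs are finite, simple and undirected. A cut vertex of a connected graph $G$ is a vertex $p$ such that $G-p$ is disconnected. $G[X]$ denotes the subgraph induced by $X\subseteq V(G)$. A transition of a graph $G$ is an unordered pair $\{ab,bc\}$ of two distinct edges of $G$ sharing the vertex $b$ (so $a\neq c$); it is written $abc$. A walk in $G$ is a sequence $(v_1,\dots,v_k)$ of vertices with $v_iv_{i+1}\in E(G)$ for all $i\le k-1$; it leads from $v_1$ to $v_k$. For a set $T$ of transitions of $G$, a walk $(v_1,\dots,v_k)$ is $T$-compatible if for every $i\in[1,k-2]$, either $v_i=v_{i+2}$ or $v_iv_{i+1}v_{i+2}\in T$. The graph $G$ is $T$-connected, and $T$ is a connecting transition set of $G$, if for all vertices $u,v$ of $G$ there is a $T$-compatible walk leading from $u$ to $v$. A connecting hypergraph of $G$ is a set $H$ of subsets of $V(G)$ such that every $E\in H$ satisfies $|E|\ge 2$ and $G[E]$ is connected, and for every pair of distinct non-adjacent vertices $u,v$ of $G$ there exists $E\in H$ with $u,v\in E$. Its cost is $\mathrm{cost}(H)=\sum_{E\in H}(|E|-2)$. *)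

(* A finite simple graph is a symmetric irreflexive
   relation e : rel V on a finType V (vertex set = all of V). *)
From mathcomp Require Import all_boot.
Set Implicit Arguments. Unset Strict Implicit. Unset Printing Implicit Defensive.

Section Graphs.
Variable V : finType.
Variable e : rel V.

Definition connected_graph : Prop := forall x y : V, connect e x y.

Definition del_rel (p : V) : rel V :=
  fun x y => [&& e x y, x != p & y != p].

Definition cut_vertex (p : V) : Prop :=
  exists u v : V, [/\ u != p, v != p & ~~ connect (del_rel p) u v].

(* A transition {ab, bc} (a <> c) is encoded canonically as the pair
   (b, {a, c}) of its middle vertex and its two-element set of ends. *)
Definition transition := (V * {set V})%type.

Definition trans_of (a b c : V) : transition := (b, [set a; c]).

Definition is_transition (t : transition) : Prop :=
  #|t.2| = 2 /\ forall x, x \in t.2 -> e t.1 x.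

Definition transition_set (Tr : {set transition}) : Prop :=
  forall t, t \in Tr -> is_transition t.

Definition compatible (Tr : {set transition}) (x : V) (s : seq V) : Prop :=
  let w := x :: s in
  forall i, i.+2 < size w ->
    nth x w i = nth x w i.+2 \/
    trans_of (nth x w i) (nth x w i.+1) (nth x w i.+2) \in Tr.

Definition T_connected (Tr : {set transition}) : Prop :=
  forall u v : V, exists s : seq V,
    [/\ path e u s, last u s = v & compatible Tr u s].

Definition connecting_transition_set (Tr : {set transition}) : Prop :=
  transition_set Tr /\ T_connected Tr.

Definition induced_rel (E : {set V}) : rel V :=
  fun x y => [&& e x y, x \in E & y \in E].

Definition induced_connected (E : {set V}) : Prop :=
  forall x y, x \in E -> y \in E -> connect (induced_rel E) x y.

Definition connecting_hypergraph (H : {set {set V}}) : Prop :=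
  (forall E, E \in H -> 2 <= #|E| /\ induced_connected E) /\
  (forall u v : V, u != v -> ~~ e u v ->
     exists2 E, E \in H & (u \in E) && (v \in E)).

Definition hcost (H : {set {set V}}) : nat := \sum_(E in H) (#|E| - 2).

End Graphs.

From mathcomp Require Import all_boot zify.
Set Implicit Arguments. Unset Strict Implicit. Unset Printing Implicit Defensive.

(* Let p be a cut vertex, S a component of G - p and S' the vertices outside
   S other than p, so |S| + |S'| = |V| - 1.  The pairs of S x S' are distinct
   and non-adjacent, hence covered by a connecting hypergraph H, while a
   connected hyperedge E meeting both S and S' contains p, so that
   |E /\ S| + |E /\ S'| <= |E| - 1.  Since |E /\ S| |E /\ S'| summed over H
   is at least |S| |S'|, comparing termwise yields cost(H) >= |V| - 2, which
   {V} attains.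
   A connecting transition set T yields a connecting hypergraph of cost at most
   |T|: link the edges ab and bc whenever abc is in T, and take the vertex sets
   of the components of this link graph.  A component with k edges spans at
   most k + 1 vertices and is held together by at least k - 1 transitions.
   Conversely, for a spanning tree rooted at r, the transitions
   x - par x - par (par x), together with c0 - r - c for the children c of r,
   form a connecting transition set of size |V| - 2. *)

Section Connect.
Variable X : finType.

Lemma connect_preserved (r : rel X) (P : pred X) :
  (forall x y, P x -> r x y -> P y) -> forall x y, connect r x y -> P x -> P y.
Proof.
move=> rP x y /connectP [s rs ->]; elim: s x rs => //= z s IHs x /andP [rxz rs] Px.
exact: IHs rs (rP x z Px rxz).
Qed.

Lemma connect_restrict (r r' : rel X) (P : pred X) :
  (forall x y, P x -> r x y -> P y && r' x y) ->
  forall x y, P x -> connect r x y -> connect r' x y.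
Proof.
move=> rP x y Px /connectP [s rs ->]; elim: s x Px rs => //= z s IHs x Px.
case/andP=> /(rP x z Px) /andP [Pz r'xz] rs.
exact: connect_trans (connect1 r'xz) (IHs z Pz rs).
Qed.

Definition pairs_rel (L : seq (X * X)) : rel X :=
  fun x y => ((x, y) \in L) || ((y, x) \in L).

Lemma pairs_rel_sym L : symmetric (pairs_rel L).
Proof. by move=> x y; rewrite /pairs_rel orbC. Qed.

(* By induction on L: each new pair merges at most two labels. *)
Lemma exists_pairs_labelling L : exists f : X -> X,
  (forall x y, pairs_rel L x y -> f x = f y) /\ #|X| <= #|[set f x | x in X]| + size L.
Proof.
elim: L => [|[a b] L [f [fL cardf]]].
  by exists id; rewrite card_imset ?addn0.
have [fab|fab] := eqVneq (f a) (f b).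
  exists f; split; last by rewrite addnS ltnW.
  move=> x y; rewrite /pairs_rel !inE.
  by case/orP=> [/orP [/eqP [-> ->] //|xyL]|/orP [/eqP [-> ->] //|yxL]];
    apply: fL; rewrite /pairs_rel ?xyL ?yxL ?orbT.
pose g x := if f x == f b then f a else f x.
exists g; split.
  move=> x y; rewrite /pairs_rel !inE /g.
  case/orP=> [/orP [/eqP [-> ->]|xyL]|/orP [/eqP [-> ->]|yxL]];
    rewrite ?eqxx ?(negbTE fab) // (fL x y) // /pairs_rel ?xyL ?yxL ?orbT //.
have -> : [set g x | x in X] = [set f x | x in X] :\ f b.
  apply/setP => z; rewrite !inE; apply/imsetP/andP => [[x _ ->]|[zfb /imsetP [x _ zfx]]].
    rewrite /g; case: ifP => [_|/negbT fxb]; first by rewrite fab imset_f.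
    by rewrite fxb imset_f.
  by exists x; rewrite // /g -zfx (negbTE zfb).
by move: cardf; rewrite (cardsD1 (f b)) imset_f //= add1n addSn addnS.
Qed.

Lemma card_le_pairs_connected L (S : {set X}) :
  (forall x y, x \in S -> y \in S -> connect (pairs_rel L) x y) ->
  #|S| <= (size L).+1.
Proof.
move=> connS; have [f [fL cardf]] := exists_pairs_labelling L.
have [->|[x0 x0S]] := set_0Vmem S; first by rewrite cards0.
have f_const x : x \in S -> f x = f x0.
  move=> xS; apply/eqP; apply: (connect_preserved (P := fun y => f y == f x0)) (connS x0 x x0S xS) _ => //.
  by move=> y z /eqP <- /fL ->.
have sub : [set f x | x in X] \subset f x0 |: [set f x | x in ~: S].
  apply/subsetP => _ /imsetP [x _ ->]; rewrite !inE.
  by case: (boolP (x \in S)) => [/f_const ->|xS]; rewrite ?eqxx // imset_f ?orbT ?inE.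
have := subset_leq_card sub; rewrite cardsU1.
have := leq_imset_card (fun x => f x) (~: S); move: cardf; rewrite -(cardsC S).
by case: (_ \notin _) => /=; lia.
Qed.

End Connect.

Lemma sum_imset_le (I J : finType) (h : I -> J) (A : {set I}) (F : J -> nat) :
  \sum_(j in h @: A) F j <= \sum_(i in A) F (h i).
Proof.
rewrite (partition_big_imset h) /=; apply: leq_sum => _ /imsetP [i iA ->].
by rewrite (bigD1 i) /= ?iA ?eqxx // leq_addr.
Qed.

Lemma card_le_sum_cover (X I : finType) (S : {set X}) (J : {set I}) (F : I -> {set X}) :
  (forall x, x \in S -> exists2 i, i \in J & x \in F i) ->
  #|S| <= \sum_(i in J) #|F i|.
Proof.
move=> covS; apply: leq_trans (sum_imset_le F J (fun A => #|A|)).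
apply: leq_trans (leq_card_cover (F @: J)).
apply/subset_leq_card/subsetP => x /covS [i iJ xFi].
by apply/bigcupP; exists (F i); rewrite ?imset_f.
Qed.

Lemma mul_le_mul_addn_sub1 a b x y : 0 < x <= a -> 0 < y <= b ->
  (a + b - 1) * (x * y) <= a * b * (x + y - 1).
Proof.
move=> /andP [/prednK <- /subnKC <-] /andP [/prednK <- /subnKC <-].
move: x.-1 y.-1 (a - _) (b - _) => m n q p.
by rewrite !addSn addnS !subn1 /= !(mulnDl, mulnDr, mulSn, mulnS); nia.
Qed.

Lemma sum_ge_of_sum_mul_ge (I : finType) (J : {set I}) (c x y : I -> nat) a b :
  0 < a -> 0 < b ->
  (forall i, i \in J -> x i <= a /\ y i <= b) ->
  (forall i, i \in J -> 0 < x i -> 0 < y i -> x i + y i <= (c i).+1) ->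
  a * b <= \sum_(i in J) x i * y i ->
  a + b - 1 <= \sum_(i in J) c i.
Proof.
move=> a_gt0 b_gt0 xy_le xy_c ab_le.
have ab_gt0 : 0 < a * b by rewrite muln_gt0 a_gt0.
rewrite -(leq_pmul2r ab_gt0).
apply: leq_trans (leq_mul (leqnn _) ab_le) _.
rewrite big_distrr big_distrl /=; apply: leq_sum => i iJ.
have [xa yb] := xy_le i iJ.
have [->|x_gt0] := posnP (x i); first by rewrite mul0n muln0.
have [->|y_gt0] := posnP (y i); first by rewrite !muln0.
rewrite [c i * _]mulnC; apply: leq_trans (mul_le_mul_addn_sub1 _ _) _;
  rewrite ?x_gt0 ?y_gt0 // leq_mul2l.
by have := xy_c i iJ x_gt0 y_gt0; lia.
Qed.

Section CutVertex.
Variables (V : finType) (e : rel V) (p u : V).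
Hypothesis up : u != p.

Let side := [set x | connect (del_rel e p) u x].
Let coside := ~: side :\ p.

Lemma del_rel_connect_neq x y : connect (del_rel e p) x y -> x != p -> y != p.
Proof. by apply: (connect_preserved (P := predC1 p)) => {}x {}y _ /and3P []. Qed.

Lemma p_notin_side : p \notin side.
Proof. by rewrite inE; apply/negP => /del_rel_connect_neq/(_ up); rewrite eqxx. Qed.

Lemma card_side_coside : #|side| + #|coside| = #|V| - 1.
Proof.
have := cardsC side; rewrite (cardsD1 p (~: side)) inE p_notin_side /coside; lia.
Qed.

Lemma side_coside_separated a b : a \in side -> b \in coside ->
  [/\ a != b, ~~ e a b & forall E : {set V}, a \in E -> b \in E ->
       induced_connected e E -> p \in E].
Proof.
rewrite !inE => ua /andP [bp ubN].
have abN : ~~ connect (del_rel e p) a b.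
  by apply: contra ubN; apply: connect_trans ua.
have ap : a != p := del_rel_connect_neq ua up.
split.
- by apply: contraNneq abN => ->.
- by apply: contra abN => eab; apply: connect1; rewrite /del_rel eab ap.
- move=> E aE bE Econn; apply: contraNT abN => pE.
  apply: connect_sub (Econn a b aE bE) => x y /and3P [exy xE yE].
  apply: connect1; rewrite /del_rel exy /=.
  by apply/andP; split; [move: xE | move: yE]; apply: contraTneq => ->.
Qed.

Lemma card_meet_side_coside E : induced_connected e E ->
  0 < #|E :&: side| -> 0 < #|E :&: coside| ->
  #|E :&: side| + #|E :&: coside| <= (#|E| - 2).+1.
Proof.
move=> Econn /card_gt0P [a /setIP [aE aS]] /card_gt0P [b /setIP [bE bS]].
have [_ _ /(_ E aE bE Econn) pE] := side_coside_separated aS bS.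
have disj : E :&: side :&: (E :&: coside) = set0.
  by apply/setP => x; rewrite /coside !inE; case: connect; rewrite ?andbF.
have sub : (E :&: side) :|: (E :&: coside) \subset E :\ p.
  apply/subsetP => x; rewrite in_setD1 in_setU !in_setI.
  case/orP => /andP [-> xS]; rewrite andbT; first by apply: contraTneq xS => ->; exact: p_notin_side.
  by rewrite /coside in_setD1 in xS; case/andP: xS.
have := subset_leq_card sub; rewrite cardsU (cardsD1 p E) pE.
by rewrite disj cards0; lia.
Qed.

Lemma hcost_ge_of_coside H : 0 < #|coside| ->
  connecting_hypergraph e H -> #|V| - 2 <= hcost H.
Proof.
move=> coside_gt0 [Hconn Hcov].
have side_gt0 : 0 < #|side| by apply/card_gt0P; exists u; rewrite inE connect0.
have -> : #|V| - 2 = #|side| + #|coside| - 1 by rewrite card_side_coside; lia.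
apply: (sum_ge_of_sum_mul_ge (x := fun E => #|E :&: side|) (y := fun E => #|E :&: coside|)) => //.
- by move=> E _; rewrite !subset_leq_card ?subsetIr.
- by move=> E /Hconn [_ Econn]; apply: card_meet_side_coside.
rewrite -cardsX; under eq_bigr => E _ do rewrite -cardsX.
apply: card_le_sum_cover => -[a b] /setXP [aS bS].
have [ab eabN _] := side_coside_separated aS bS.
have [E EH /andP [aE bE]] := Hcov a b ab eabN.
by exists E => //; apply/setXP; rewrite !in_setI aE bE aS bS.
Qed.

End CutVertex.

Lemma cut_vertex_hcost_ge (V : finType) (e : rel V) (p : V) :
  cut_vertex e p -> forall H, connecting_hypergraph e H -> #|V| - 2 <= hcost H.
Proof.
move=> [u [v [up vp uvN]]] H; apply: (hcost_ge_of_coside up).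
by apply/card_gt0P; exists v; rewrite !inE vp uvN.
Qed.


Section TwoSets.
Variable T : finType.

Definition set2_ends (S : {set T}) (d : T) : T * T := (nth d (enum S) 0, nth d (enum S) 1).

Lemma set2_endsP (S : {set T}) d : #|S| = 2 ->
  (set2_ends S d).1 != (set2_ends S d).2 /\
  S = [set (set2_ends S d).1; (set2_ends S d).2].
Proof.
rewrite /set2_ends cardE => S2; have := enum_uniq S; have Sx := mem_enum S.
case def_s: (enum S) S2 Sx => [|a [|b []]] // _ Sx.
rewrite /= andbT inE => ->; split => //.
by apply/setP => x; rewrite -Sx !inE.
Qed.

Lemma set2_eq_set2 (a b c d : T) : a != b -> [set a; b] = [set c; d] ->
  (c = a /\ d = b) \/ (c = b /\ d = a).
Proof.
move=> ab /setP abcd.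
have := abcd c; have := abcd d; rewrite !inE !eqxx orbT.
case/orP=> /eqP dab; case/orP=> /eqP cab; subst; auto.
- by have := abcd b; rewrite !inE eqxx orbT eq_sym (negbTE ab).
- by have := abcd a; rewrite !inE eqxx (negbTE ab).
Qed.

End TwoSets.

Arguments set2_ends : simpl never.

Section Compatible.
Variables (V : finType) (Tr : {set transition V}).

Lemma compatible_cons x y z s :
  compatible Tr x [:: y, z & s] <->
  (x = z \/ trans_of x y z \in Tr) /\ compatible Tr y (z :: s).
Proof.
rewrite /compatible; split=> [cw | [xyz cw] [|i] // lt_i].
  split=> [|i lt_i]; first exact: (cw 0).
  rewrite (set_nth_default x y (ltnW (ltnW lt_i))) (set_nth_default x y (ltnW lt_i)).
  by rewrite (set_nth_default x y lt_i); exact: (cw i.+1).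
have lt_i' : i.+2 < size [:: y, z & s] by [].
have := cw i lt_i'.
rewrite (set_nth_default x y (ltnW (ltnW lt_i'))) (set_nth_default x y (ltnW lt_i')).
by rewrite (set_nth_default x y lt_i').
Qed.

End Compatible.

Section LinkGraph.
Variables (V : finType) (e : rel V).
Hypotheses (e_sym : symmetric e) (e_irr : irreflexive e).

Definition is_edge (E : {set V}) : bool := [exists a, exists b, e a b && (E == [set a; b])].

Lemma card_edge E : is_edge E -> #|E| = 2.
Proof.
case/existsP=> a /existsP [b /andP [eab /eqP ->]].
by rewrite cards2; case: eqVneq eab => // ->; rewrite e_irr.
Qed.

(* The transition (b, {a, c}) links the edges ab and bc. *)
Definition link_ends (t : transition V) : {set V} * {set V} :=
  ([set (set2_ends t.2 t.1).1; t.1], [set t.1; (set2_ends t.2 t.1).2]).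

Variable Tr : {set transition V}.

Definition link_rel : rel {set V} := pairs_rel [seq link_ends t | t <- enum Tr].

Lemma link_rel_sym : symmetric link_rel.
Proof. exact: pairs_rel_sym. Qed.

Lemma link_relP E E' : link_rel E E' ->
  exists2 t, t \in Tr & link_ends t = (E, E') \/ link_ends t = (E', E).
Proof. by case/orP=> /mapP [t tTr ->]; exists t; rewrite mem_enum in tTr; auto. Qed.

Lemma link_rel_trans_of x y z : x != z -> trans_of x y z \in Tr ->
  link_rel [set x; y] [set y; z].
Proof.
move=> xz tTr; have tL : link_ends (trans_of x y z) \in [seq link_ends t | t <- enum Tr].
  by apply: map_f; rewrite mem_enum.
have xz2 : #|[set x; z]| = 2 by rewrite cards2 xz.
have [ac xz_ac] := set2_endsP y xz2.
move: tL ac xz_ac; rewrite [link_ends _]/link_ends [trans_of _ _ _]/trans_of.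
case: (set2_ends [set x; z] y) => a c /= tL ac /(set2_eq_set2 xz).
rewrite /link_rel /pairs_rel; case=> -[ax cz]; rewrite ax cz in tL; first by rewrite tL.
by rewrite [[set y; z]]setUC [[set x; y]]setUC tL orbT.
Qed.

Lemma link_ends_common t : t.1 \in (link_ends t).1 /\ t.1 \in (link_ends t).2.
Proof. by rewrite !inE !eqxx orbT. Qed.

Hypothesis Tr_trans : transition_set e Tr.

Lemma link_ends_edge t : t \in Tr -> is_edge (link_ends t).1 /\ is_edge (link_ends t).2.
Proof.
move=> tTr; have [t2 te] := Tr_trans tTr.
have [_ t2_ac] := set2_endsP t.1 t2.
rewrite /link_ends; case: set2_ends t2_ac => a c /= t2_ac.
have [ea ec] : e t.1 a /\ e t.1 c by split; apply: te; rewrite t2_ac !inE eqxx ?orbT.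
split; apply/existsP.
  by exists a; apply/existsP; exists t.1; rewrite e_sym ea /=.
by exists t.1; apply/existsP; exists c; rewrite ec /=.
Qed.

Lemma link_rel_edge E E' : link_rel E E' -> is_edge E'.
Proof.
by case/link_relP=> t /link_ends_edge [e1 e2] [] def_t; rewrite def_t in e1 e2.
Qed.

Lemma compatible_link x y s : compatible Tr x (y :: s) ->
  exists2 E, connect link_rel [set x; y] E & last y s \in E.
Proof.
elim: s x y => [|z s IHs] x y; first by exists [set x; y]; rewrite ?connect0 // !inE eqxx orbT.
case/compatible_cons=> xyz /IHs [E yzE zE]; exists E => //; apply: connect_trans yzE.
have [<-|xz] := eqVneq x z; first by rewrite setUC connect0.
by apply/connect1/link_rel_trans_of => //; case: xyz => // /eqP; rewrite (negPf xz).
Qed.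

Definition link_class (E : {set V}) : {set {set V}} := [set E' | connect link_rel E E'].

Lemma link_class_connect E0 E1 E2 : E1 \in link_class E0 -> E2 \in link_class E0 ->
  connect link_rel E1 E2.
Proof.
rewrite !inE => E01 E02; apply: connect_trans E02.
by rewrite (sym_connect_sym link_rel_sym).
Qed.

Lemma link_class_closed E0 E E' : E \in link_class E0 -> link_rel E E' -> E' \in link_class E0.
Proof. by rewrite !inE => E0E /connect1; apply: connect_trans. Qed.

Lemma link_class_eq E0 E : E \in link_class E0 -> link_class E = link_class E0.
Proof.
move=> E0E; apply/setP => E'; apply/idP/idP => E'in; rewrite inE.
  by rewrite inE in E'in; apply: connect_trans E'in; rewrite -inE.
exact: link_class_connect E0E E'in.
Qed.

Lemma link_class_edge E0 E : is_edge E0 -> E \in link_class E0 -> is_edge E.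
Proof.
move=> E0e; rewrite inE => E0E; apply: (connect_preserved (P := is_edge)) E0E E0e.
by move=> E1 E2 _; apply: link_rel_edge.
Qed.

Lemma cover_link_class_connect E0 (R : rel V) :
  (forall E w w', E \in link_class E0 -> w \in E -> w' \in E -> connect R w w') ->
  forall x y, x \in cover (link_class E0) -> y \in cover (link_class E0) -> connect R x y.
Proof.
move=> Rconn x y /bigcupP [E1 E1K xE1] /bigcupP [E2 E2K yE2].
pose P E := (E \in link_class E0) && [forall w in E, connect R x w].
suff /andP [_ /forall_inP] : P E2 by apply.
apply: connect_preserved (link_class_connect E1K E2K) _; last first.
  by rewrite /P E1K; apply/forall_inP => w; apply: Rconn.
move=> E E' /andP [EK /forall_inP xE] EE'; have E'K := link_class_closed EK EE'.
rewrite /P E'K; apply/forall_inP => w wE'.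
have [b bE bE'] : exists2 b, b \in E & b \in E'.
  case/link_relP: EE' => t _ [] def_t; have := link_ends_common t;
    by rewrite def_t => -[]; exists t.1.
exact: connect_trans (xE b bE) (Rconn E' b w E'K bE' wE').
Qed.

Lemma link_class_induced_connected E0 : is_edge E0 ->
  induced_connected e (cover (link_class E0)).
Proof.
move=> E0e x y; apply: cover_link_class_connect => E w w' EK wE w'E.
have /existsP [a /existsP [b /andP [eab /eqP Eab]]] := link_class_edge E0e EK.
have inK z : z \in E -> z \in cover (link_class E0) by move=> zE; apply/bigcupP; exists E.
have [<-|ww'] := eqVneq w w'; first exact: connect0.
apply: connect1; rewrite /induced_rel !inK // !andbT.
move: wE w'E ww'; rewrite Eab !inE.
by case/orP=> /eqP -> /orP [] /eqP ->; rewrite ?eqxx // e_sym.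
Qed.

Lemma card_cover_link_class E0 : is_edge E0 ->
  #|cover (link_class E0)| <= #|link_class E0|.+1.
Proof.
move=> E0e; have /existsP [d _] := E0e; set K := link_class E0.
pose L := [seq set2_ends E d | E <- enum K].
have -> : #|K| = size L by rewrite size_map -cardE.
apply: card_le_pairs_connected; apply: cover_link_class_connect => E w w' EK wE w'E.
have EL : set2_ends E d \in L by apply: map_f; rewrite mem_enum.
have [] := set2_endsP d (card_edge (link_class_edge E0e EK)).
case: (set2_ends E d) EL => a b /= EL _ defE.
move: wE w'E; rewrite defE !inE.
by case/orP=> /eqP -> /orP [] /eqP ->; rewrite ?connect0 // connect1 // /pairs_rel EL ?orbT.
Qed.

Definition link_count (K : {set {set V}}) : nat :=
  #|[set t in Tr | (link_ends t).1 \in K]|.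

Lemma card_link_class E0 : #|link_class E0| <= (link_count (link_class E0)).+1.
Proof.
set K := link_class E0; pose TK := [set t in Tr | (link_ends t).1 \in K].
have -> : link_count K = size [seq link_ends t | t <- enum TK] by rewrite size_map -cardE.
apply: card_le_pairs_connected => E1 E2 E1K E2K.
apply: (connect_restrict (P := mem K)) E1K (link_class_connect E1K E2K) => E E' EK EE'.
have E'K := link_class_closed EK EE'; rewrite [mem K E']E'K /=.
case/link_relP: EE' => t tTr def_t.
have tTK : link_ends t \in [seq link_ends t | t <- enum TK].
  by apply: map_f; rewrite mem_enum inE tTr; case: def_t => ->.
by rewrite /pairs_rel; case: def_t tTK => -> ->; rewrite ?orbT.
Qed.

Definition link_classes : {set {set {set V}}} := [set link_class E | E in [set E | is_edge E]].

Lemma sum_link_count : \sum_(K in link_classes) link_count K <= #|Tr|.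
Proof.
pose cls t := link_class (link_ends t).1.
have count_eq K : K \in link_classes -> link_count K = #|[set t in Tr | cls t == K]|.
  case/imsetP => E0 _ ->; apply: eq_card => t; rewrite !in_set; congr (_ && _).
  apply/idP/eqP => [E0t|cls_t]; first by apply: link_class_eq; rewrite inE.
  have : (link_ends t).1 \in cls t by rewrite inE connect0.
  by rewrite cls_t inE.
rewrite (eq_bigr _ count_eq) -sum1_card (partition_big cls predT) //=.
rewrite big_mkcond /=; apply: leq_sum => K _; case: (K \in _) => //.
by rewrite sum1dep_card; apply: eq_leq; apply: eq_card => t; rewrite !inE.
Qed.

Definition link_hypergraph : {set {set V}} := [set cover K | K in link_classes].

Lemma hcost_link_hypergraph : hcost link_hypergraph <= #|Tr|.
Proof.
apply: leq_trans sum_link_count.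
apply: leq_trans (sum_imset_le cover link_classes (fun E => #|E| - 2)) _.
apply: leq_sum => _ /imsetP [E0 + ->]; rewrite inE => E0e.
by have := card_cover_link_class E0e; have := card_link_class E0; lia.
Qed.

Lemma link_hypergraph_connecting : T_connected e Tr -> connecting_hypergraph e link_hypergraph.
Proof.
move=> Tconn; split.
  move=> _ /imsetP [_ /imsetP [E0 + ->] ->]; rewrite inE => E0e.
  split; last exact: link_class_induced_connected.
  by rewrite -(card_edge E0e); apply/subset_leq_card/bigcup_sup; rewrite inE connect0.
move=> x y xy _; have [[|z s] [/= xzs def_y cw]] := Tconn x y.
  by rewrite -def_y eqxx in xy.
have [E xzE yE] := compatible_link cw.
have xz_edge : is_edge [set x; z].
  by case/andP: xzs => exz _; apply/existsP; exists x; apply/existsP; exists z; rewrite exz /=.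
exists (cover (link_class [set x; z])); first by rewrite !imset_f ?inE.
apply/andP; split; apply/bigcupP; first by exists [set x; z]; rewrite ?inE ?connect0 ?eqxx.
by exists E; rewrite ?inE -?def_y.
Qed.

End LinkGraph.

Lemma hcost_le_connecting_transition_set (V : finType) (e : rel V) Tr :
  symmetric e -> irreflexive e -> connecting_transition_set e Tr ->
  exists2 H, connecting_hypergraph e H & hcost H <= #|Tr|.
Proof.
move=> e_sym e_irr [Ttr Tconn]; exists (link_hypergraph e Tr).
  exact: link_hypergraph_connecting.
exact: hcost_link_hypergraph.
Qed.

Section RootedTree.
Variables (V : finType) (e : rel V) (r : V).
Hypothesis e_conn : connected_graph e.

Fixpoint ball (k : nat) : {set V} :=
  if k is k'.+1 then ball k' :|: [set z | [exists y in ball k', e y z]] else [set r].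

Lemma exists_ball x : exists k, x \in ball k.
Proof.
have /connectP [s rs ->] := e_conn r x.
elim/last_ind: s rs => [|s z IHs]; first by exists 0; rewrite inE.
rewrite rcons_path => /andP [/IHs [k sk] ez]; exists k.+1.
by rewrite last_rcons /= !inE; apply/orP; right; apply/existsP; exists (last r s); rewrite sk.
Qed.

Definition depth x : nat := ex_minn (exists_ball x).

Lemma exists_parent x : x != r -> exists2 y, e y x & depth y < depth x.
Proof.
rewrite /depth; case: ex_minnP => -[|k]; first by rewrite inE => /eqP ->; rewrite eqxx.
rewrite /= inE => /orP [xk min_k _|]; first by have := min_k k xk; rewrite ltnn.
rewrite inE => /existsP [y /andP [yk eyx]] _ _; exists y => //.
by case: ex_minnP => m _ /(_ k yk).
Qed.

Lemma exists_rooted_tree : exists par : V -> V, exists d : V -> nat,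
  forall x, x != r -> e (par x) x /\ d (par x) < d x.
Proof.
exists (fun x => odflt r [pick y | e y x && (depth y < depth x)]), depth => x xr.
case: pickP => [y /andP [] //|noy]; have [y eyx lt_yx] := exists_parent xr.
by have := noy y; rewrite eyx lt_yx.
Qed.

End RootedTree.

Section Darts.
Variables (V : finType) (e : rel V) (Tr : {set transition V}).

Definition dart_step : rel (V * V) := fun d d' =>
  [&& d'.1 == d.2, e d.2 d'.2 & (d.1 == d'.2) || (trans_of d.1 d.2 d'.2 \in Tr)].

Lemma dart_step_trans_of a b c : e b c ->
  (a == c) || (trans_of a b c \in Tr) -> connect dart_step (a, b) (b, c).
Proof. by move=> ebc abc; apply: connect1; rewrite /dart_step /= eqxx ebc. Qed.

Lemma darts_walk a b ds : e a b -> path dart_step (a, b) ds ->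
  path e a (b :: map snd ds) /\ compatible Tr a (b :: map snd ds).
Proof.
elim: ds a b => [|[b' c] ds IHds] a b eab /=; first by rewrite eab; split => // -[].
case/andP=> /and3P [/eqP /= -> ebc abc] /(IHds b c ebc) /= [-> cw].
rewrite eab; split => //; apply/compatible_cons; split => //.
by case/orP: abc => [/eqP ->|]; [left|right].
Qed.

Lemma compatible_walk_of_darts a b d : e a b -> connect dart_step (a, b) d ->
  exists s, [/\ path e a s, last a s = d.2 & compatible Tr a s].
Proof.
move=> eab /connectP [ds /(darts_walk eab) [ps cs] ->].
by exists (b :: map snd ds); rewrite /= (last_map snd ds (a, b)).
Qed.

End Darts.

Section TreeTransitions.
Variables (V : finType) (e : rel V) (r : V) (par : V -> V) (depth : V -> nat).
Hypothesis e_sym : symmetric e.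
Hypothesis par_spec : forall x, x != r -> e (par x) x /\ depth (par x) < depth x.

Definition child x := (x != r) && (par x == r).

Lemma exists_child x : x != r -> exists c, child c.
Proof.
have [n] := ubnP (depth x); elim: n x => // n IHn x lt_x xr.
have [px_r|px_r] := eqVneq (par x) r; first by exists x; rewrite /child xr px_r eqxx.
by apply: (IHn (par x)) => //; have [_] := par_spec xr; lia.
Qed.

Variable c0 : V.
Hypothesis child_c0 : child c0.

(* Every x whose parent is not r contributes x - par x - par (par x), and every
   other child c of r contributes c0 - r - c: one transition per vertex besides
   r and c0. *)
Definition tree_transitions : {set transition V} :=
  [set (par x, [set x; par (par x)]) | x in [set x | (x != r) && (par x != r)]]
  :|: [set (r, [set c0; c]) | c in [set c | child c] :\ c0].

Lemma card_tree_transitions : #|tree_transitions| <= #|V| - 2.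
Proof.
set deep := [set x | (x != r) && (par x != r)]; set kids := [set c | child c].
have split_V : #|deep| + #|kids| = #|[set~ r]|.
  have UV : deep :|: kids = [set~ r].
    by apply/setP => x; rewrite !inE /child; case: (x == r); case: (par x == r).
  have IV : deep :&: kids = set0.
    by apply/setP => x; rewrite !inE /child; case: (par x == r); rewrite ?andbF.
  by rewrite -cardsUI UV IV cards0 addn0.
rewrite /tree_transitions -/deep -/kids.
set A := [set _ | x in deep]; set B := [set _ | c in kids :\ c0].
have cardA : #|A| <= #|deep| by apply: leq_imset_card.
have cardB : #|B| <= #|kids :\ c0| by apply: leq_imset_card.
have kids_c0 : #|kids| = #|kids :\ c0|.+1 by rewrite (cardsD1 c0 kids) inE child_c0.
have card_nr : #|[set~ r]| = #|V| - 1 by rewrite cardsC1 subn1.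
(* Restated at type [V * {set V}], where [lia] sees the same atom as [cardsU A B]. *)
suff le_AB : #|A :|: B| <= #|V| - 2 by exact le_AB.
have := cardsU A B; lia.
Qed.

Lemma tree_transitions_transition_set : transition_set e tree_transitions.
Proof.
move=> t; rewrite inE => /orP [] /imsetP [x + ->]; rewrite !inE.
  case/andP=> xr pxr; have [ex lt_x] := par_spec xr; have [epx lt_px] := par_spec pxr.
  split=> /=; last by move=> w; rewrite !inE => /orP [] /eqP ->; rewrite // e_sym.
  by rewrite cards2; case: eqVneq lt_px => // <-; lia.
case/andP=> xc0 /andP [xr /eqP pxr]; split=> /=; first by rewrite cards2 eq_sym xc0.
move=> w; rewrite !inE => /orP [] /eqP ->.
  by case/andP: child_c0 => c0r /eqP <-; have [] := par_spec c0r.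
by rewrite -{1}pxr; have [] := par_spec xr.
Qed.

Lemma child_edge c : child c -> e r c.
Proof. by case/andP=> cr /eqP <-; have [] := par_spec cr. Qed.

Lemma mem_tree_transitions_deep x : x != r -> par x != r ->
  (par x, [set x; par (par x)]) \in tree_transitions.
Proof. by move=> xr pxr; apply/setUP; left; apply/imsetP; exists x; rewrite // inE xr. Qed.

Lemma mem_tree_transitions_root c : child c -> c != c0 ->
  (r, [set c0; c]) \in tree_transitions.
Proof. by move=> kc cc0; apply/setUP; right; apply/imsetP; exists c; rewrite // !inE cc0. Qed.

Local Notation step := (dart_step e tree_transitions).

Lemma darts_to_root x : x != r -> exists2 c, child c & connect step (x, par x) (c, r).
Proof.
have [n] := ubnP (depth x); elim: n x => // n IHn x lt_x xr.
have [pxr|pxr] := eqVneq (par x) r; first by exists x; rewrite ?/child ?xr pxr ?eqxx ?connect0.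
have [_ lt_px] := par_spec xr; have [eppx _] := par_spec pxr.
have [c kc pxc] := IHn (par x) ltac:(lia) pxr; exists c => //.
apply: connect_trans pxc; apply: dart_step_trans_of; first by rewrite e_sym.
by rewrite mem_tree_transitions_deep ?orbT.
Qed.

Lemma darts_from_root x : x != r -> exists2 c, child c & connect step (r, c) (par x, x).
Proof.
have [n] := ubnP (depth x); elim: n x => // n IHn x lt_x xr.
have [pxr|pxr] := eqVneq (par x) r; first by exists x; rewrite ?/child ?xr pxr ?eqxx ?connect0.
have [exp lt_px] := par_spec xr.
have [c kc pxc] := IHn (par x) ltac:(lia) pxr; exists c => //.
apply: connect_trans pxc _; apply: dart_step_trans_of => //.
by rewrite /trans_of setUC mem_tree_transitions_deep ?orbT.
Qed.

Lemma darts_through_root c c' : child c -> child c' -> connect step (c, r) (r, c').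
Proof.
move=> kc kc'; have er0 := child_edge child_c0.
apply: connect_trans (_ : connect step (c, r) (r, c0)) _.
  apply: dart_step_trans_of => //; have [->|cc0] := eqVneq c c0; rewrite ?eqxx //.
  by rewrite /trans_of setUC mem_tree_transitions_root ?orbT.
apply: connect_trans (_ : connect step (r, c0) (c0, r)) _.
  by apply: dart_step_trans_of; [rewrite e_sym | rewrite eqxx].
apply: dart_step_trans_of; first exact: child_edge.
by have [->|c'c0] := eqVneq c' c0; rewrite ?eqxx // /trans_of mem_tree_transitions_root ?orbT.
Qed.

Lemma tree_transitions_T_connected : T_connected e tree_transitions.
Proof.
move=> x y; have [<-|xy] := eqVneq x y; first by exists [::]; split => // -[].
have [xr|xr] := eqVneq x r.
  have yr : y != r by rewrite -xr eq_sym.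
  have [c kc rc] := darts_from_root yr; rewrite xr.
  exact: compatible_walk_of_darts (child_edge kc) rc.
have [c kc xc] := darts_to_root xr.
have exp : e x (par x) by rewrite e_sym; have [] := par_spec xr.
have [->|yr] := eqVneq y r; first exact: compatible_walk_of_darts exp xc.
have [c' kc' c'y] := darts_from_root yr.
apply: compatible_walk_of_darts exp (connect_trans xc (connect_trans _ c'y)).
exact: darts_through_root.
Qed.

Lemma tree_transitions_connecting : connecting_transition_set e tree_transitions.
Proof. by split; [apply: tree_transitions_transition_set | apply: tree_transitions_T_connected]. Qed.

End TreeTransitions.

Lemma exists_small_connecting_transition_set (V : finType) (e : rel V) (r u : V) :
  symmetric e -> connected_graph e -> u != r ->
  exists2 Tr, connecting_transition_set e Tr & #|Tr| <= #|V| - 2.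
Proof.
move=> e_sym e_conn ur; have [par [depth par_spec]] := exists_rooted_tree r e_conn.
have [c0 kc0] := exists_child par_spec ur.
exists (tree_transitions r par c0); last exact: card_tree_transitions.
exact (tree_transitions_connecting e_sym par_spec kc0).
Qed.

Lemma full_connecting_hypergraph (V : finType) (e : rel V) (u v : V) :
  connected_graph e -> u != v -> connecting_hypergraph e [set [set: V]].
Proof.
move=> e_conn uv; split=> [_ /set1P -> | x y _ _]; last by exists [set: V]; rewrite ?inE.
split; first by rewrite cardsT (cardD1 u) (cardD1 v) !inE eq_sym uv.
move=> x y _ _; apply: connect_sub (e_conn x y) => a b eab.
by apply: connect1; rewrite /induced_rel eab !inE.
Qed.

Lemma hcost_full (V : finType) : hcost [set [set: V]] = #|V| - 2.
Proof. by rewrite /hcost big_set1 cardsT. Qed.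

Theorem lemma5 (V : finType) (e : rel V)
  (e_sym : symmetric e) (e_irr : irreflexive e)
  (Gconn : connected_graph e) (p : V) (Hcut : cut_vertex e p) :
  ((exists Tr : {set transition V},
      connecting_transition_set e Tr /\ #|Tr| = #|V| - 2) /\
   (forall Tr : {set transition V},
      connecting_transition_set e Tr -> #|V| - 2 <= #|Tr|)) /\
  (connecting_hypergraph e [set [set: V]] /\
   forall H : {set {set V}}, connecting_hypergraph e H ->
      hcost [set [set: V]] <= hcost H).
Proof.
have [u [_ [up _ _]]] := Hcut.
have hcost_ge := cut_vertex_hcost_ge Hcut.
have trans_ge Tr : connecting_transition_set e Tr -> #|V| - 2 <= #|Tr|.
  by case/(hcost_le_connecting_transition_set e_sym e_irr) => H /hcost_ge; apply: leq_trans.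
split; split => //.
- have [Tr TrC le_Tr] := exists_small_connecting_transition_set e_sym Gconn up.
  by exists Tr; split => //; apply/eqP; rewrite eqn_leq le_Tr trans_ge.
- exact: full_connecting_hypergraph Gconn up.
- by move=> H /hcost_ge; rewrite hcost_full.
Qed.
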